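(* If $p\in I(f)$ then $p$ is a quasi-homogeneous singularity of $\eta$.
   Context: Let $n=3$. Let $f:\mathbb P^3\dashrightarrow\mathbb P^2$, $f=(F_0:F_1:F_2^\gamma)$ with $F_0,F_1,F_2$ homogeneous without common factors, $\deg F_0=\deg F_1=\gamma\deg F_2=\nu\geq 2$, $\gamma\geq 2$, be generic, i.e. $dF_0\wedge dF_1\wedge dF_2\neq 0$ at every point of $\tilde f^{-1}(0)\setminus\{0\}$ ($\tilde f$ the lift to $\mathbb C^{4}$); $I(f)=\Pi(\tilde f^{-1}(0))$ is its indeterminacy locus. Let $\mathcal G$ be a foliation of degree $d\geq 2$ on $\mathbb P^2$ leaving the line $Z=0$ invariant, defined by $ZA\,dX+ZB\,dY+C\,dZ$ with $XA+YB+C=0$, all of whose singularities are nondegenerate with nonreal characteristic numbers, whose only algebraic invariant curve is that line, and such that $\mathrm{Sing}(\mathcal G)$ does not meet $Y_2(f)=\Pi_2[\tilde f\{w: dF_0\wedge dF_1\wedge dF_2(w)=0\}]$. Let $\mathcal F=f^*\mathcal G$. Near $p\in I(f)$ there is a local chart $(x_0,x_1,x_2)$ with $\tilde f=(x_0,x_1,x_2^\gamma)$, in which $\mathcal F$ is represented by $\eta=x_2A(x_0,x_1,x_2^\gamma)dx_0+x_2B(x_0,x_1,x_2^\gamma)dx_1+\gamma C(x_0,x_1,x_2^\gamma)dx_2$. A point $p$ is a quasi-homogeneous singularity of an integrable $1$-form $\omega$ on a neighborhood of $p\in\mathbb C^3$ if, writing $d\omega=i_{\mathcal Z}\mu$ for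 a holomorphic $3$-form $\mu$ with $\mu(p)\neq 0$ and holomorphic vector field $\mathcal Z$, $p$ is an isolated singularity of $\mathcal Z$ and all eigenvalues of $D\mathcal Z(p)$ are zero. *)

From HB Require Import structures.
From mathcomp Require Import all_boot all_order all_algebra.
From mathcomp Require Import complex.
From mathcomp Require Import reals.
From mathcomp Require Import mpoly.

Set Implicit Arguments.
Unset Strict Implicit.
Unset Printing Implicit Defensive.

Import Order.TTheory GRing.Theory Num.Theory.
Local Open Scope ring_scope.

Section Defs.
Variable C : numClosedFieldType.

Definition mdvd n (H P : {mpoly C[n]}) : Prop := exists Q, P = H * Q.

Definition mconst n (H : {mpoly C[n]}) : Prop := (msize H <= 1)%N.

Definition mirreducible n (F : {mpoly C[n]}) : Prop :=
  ~ mconst F /\ forall G H : {mpoly C[n]}, F = G * H -> mconst G \/ mconst H.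

Definition pt3 (a b c : C) : 'I_3 -> C := fun i => nth 0 [:: a; b; c] i.

Definition ftilde (gamma : nat) (F0 F1 F2 : {mpoly C[4]}) (w : 'I_4 -> C)
  : 'I_3 -> C := pt3 F0.@[w] F1.@[w] (F2.@[w] ^+ gamma).

(* Jacobian matrix of (F0,F1,F2) at w; dF0/\dF1/\dF2 (w) <> 0 iff its rows
   are linearly independent *)
Definition jacF (F0 F1 F2 : {mpoly C[4]}) (w : 'I_4 -> C) : 'M[C]_(3, 4) :=
  \matrix_(i < 3, j < 4) (nth 0 [:: F0; F1; F2] i)^`M(j).@[w].

Definition nonzero_pt n (v : 'I_n -> C) : Prop := exists i, v i != 0.

(* coefficients of the homogeneous 1-form; variables X,Y,Z = x_0,x_1,x_2 *)
Definition omG (A B Cc : {mpoly C[3]}) (i : 'I_3) : {mpoly C[3]} :=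
  nth 0 [:: 'X_(inord 2) * A; 'X_(inord 2) * B; Cc] i.

Definition singG (A B Cc : {mpoly C[3]}) (q : 'I_3 -> C) : Prop :=
  nonzero_pt q /\ forall i, (omG A B Cc i).@[q] = 0.

(* affine chart {x_k = 1} of P^2, with affine coordinates x_a, x_b (a < b) *)
Definition chart_a (k : 'I_3) : 'I_3 := if k == 0 :> nat then inord 1 else inord 0.
Definition chart_b (k : 'I_3) : 'I_3 := if k == 2 :> nat then inord 1 else inord 2.

(* linear part at q (with q k <> 0) of the vector field (om_b, -om_a) defining
   G in the affine chart x_k = 1 (restriction of the 1-form: om_a dx_a + om_b dx_b) *)
Definition lin_part (om : 'I_3 -> {mpoly C[3]}) (k : 'I_3) (q : 'I_3 -> C)
  : 'M[C]_2 :=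
  let a := chart_a k in let b := chart_b k in
  let v := fun i => q i / q k in
  \matrix_(i < 2, j < 2)
     (let c := if j == 0 :> nat then a else b in
      if i == 0 :> nat then (om b)^`M(c).@[v] else - (om a)^`M(c).@[v]).

Definition nondeg_nonreal (J : 'M[C]_2) : Prop :=
  \det J != 0 /\
  exists l1 l2, [/\ eigenvalue J l1, eigenvalue J l2, l1 != 0, l2 != 0
                  & l1 / l2 \notin Num.real].

(* F (homogeneous) defines a G-invariant curve: F divides om /\ dF *)
Definition invariant_curve (om : 'I_3 -> {mpoly C[3]}) (F : {mpoly C[3]}) : Prop :=
  forall i j : 'I_3, mdvd F (om i * F^`M(j) - om j * F^`M(i)).

(* d eta, as the coefficients of dx1/\dx2, dx0/\dx2, dx0/\dx1 *)
Definition d1form (eta : 'I_3 -> {mpoly C[3]}) : 'I_3 -> {mpoly C[3]} :=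
  fun k => nth 0
   [:: (eta (inord 2))^`M(inord 1) - (eta (inord 1))^`M(inord 2);
       (eta (inord 2))^`M(inord 0) - (eta (inord 0))^`M(inord 2);
       (eta (inord 1))^`M(inord 0) - (eta (inord 0))^`M(inord 1)] k.

(* i_Z mu for mu = h dx0/\dx1/\dx2, same basis as above *)
Definition contr (h : {mpoly C[3]}) (Z : 'I_3 -> {mpoly C[3]}) : 'I_3 -> {mpoly C[3]} :=
  fun k => nth 0 [:: h * Z (inord 0); - (h * Z (inord 1)); h * Z (inord 2)] k.

(* eta /\ d eta = 0 (coefficient of dx0/\dx1/\dx2) *)
Definition integrable (eta : 'I_3 -> {mpoly C[3]}) : Prop :=
  eta (inord 0) * d1form eta (inord 0) - eta (inord 1) * d1form eta (inord 1)
  + eta (inord 2) * d1form eta (inord 2) = 0.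

Definition origin3 : 'I_3 -> C := fun _ => 0.

Definition isolated_zero (Z : 'I_3 -> {mpoly C[3]}) : Prop :=
  (forall i, (Z i).@[origin3] = 0) /\
  exists eps : C, 0 < eps /\
    forall x : 'I_3 -> C, (forall i, `|x i| < eps) ->
      (forall i, (Z i).@[x] = 0) -> forall i, x i = 0.

Definition DZ0 (Z : 'I_3 -> {mpoly C[3]}) : 'M[C]_3 :=
  \matrix_(i < 3, j < 3) (Z i)^`M(j).@[origin3].

(* the origin is a quasi-homogeneous singularity of the integrable 1-form eta:
   d eta = i_Z mu with mu = dx0/\dx1/\dx2 (mu(0) <> 0), the origin is an
   isolated zero of Z and all eigenvalues of DZ(0) vanish *)
Definition qh_singularity (eta : 'I_3 -> {mpoly C[3]}) : Prop :=
  integrable eta /\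
  exists Z : 'I_3 -> {mpoly C[3]},
    [/\ d1form eta = contr 1 Z, isolated_zero Z
      & forall a, eigenvalue (DZ0 Z) a -> a = 0].

Definition subst_g (gamma : nat) : 3.-tuple {mpoly C[3]} :=
  [tuple 'X_(inord 0); 'X_(inord 1); 'X_(inord 2) ^+ gamma].

Definition eta_form (gamma : nat) (A B Cc : {mpoly C[3]}) : 'I_3 -> {mpoly C[3]} :=
  fun k => nth 0
   [:: 'X_(inord 2) * (A \mPo subst_g gamma);
       'X_(inord 2) * (B \mPo subst_g gamma);
       gamma%:R *: (Cc \mPo subst_g gamma)] k.

End Defs.

(* In the chart, d eta = i_Z (dx0 /\ dx1 /\ dx2) where the components of Z are
   combinations of the first partials of A, B, C at (x0, x1, x2^gamma).  As A and B
   have degree d >= 2, every component of Z vanishes to second order at the origin,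
   so DZ(0) = 0.  The origin is even the only zero of Z: at a zero x, the Euler
   relations for A, B, C and XA + YB + C = 0 make q = (x0, x1, x2^gamma) a singular
   point of G unless x = 0; if x2 <> 0 the linear part of G at q is traceless, and
   if x2 = 0 it is triangular with diagonal (l, -gamma l), so in both cases its
   characteristic numbers would be real.  Integrability is the pullback of
   omega /\ d omega = 0, which again follows from the Euler relations. *)

From HB Require Import structures.
From mathcomp Require Import all_boot all_order all_algebra.
From mathcomp Require Import mpoly ring.
From mathcomp Require Import complex reals.
From Stdlib Require Import FunctionalExtensionality.
Import Order.TTheory GRing.Theory Num.Theory.
Set Implicit Arguments.
Unset Strict Implicit.
Unset Printing Implicit Defensive.
Local Open Scope ring_scope.

Section MpolyCalculus.
Variables (K : comNzRingType) (n : nat).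
Implicit Types p q : {mpoly K[n]}.

Lemma mderivXU (i j : 'I_n) : ('X_i : {mpoly K[n]})^`M(j) = (i == j)%:R.
Proof.
rewrite mderivX mnm1E; case: eqP => [->|_]; last by rewrite scale0r.
by rewrite -{1}[U_(j)%MM]add0m addmK mpolyX0 scale1r.
Qed.

Lemma mderiv_exp j p k : (p ^+ k)^`M(j) = p^`M(j) * p ^+ k.-1 *+ k.
Proof.
case: k => [|k]; first by rewrite expr0 -mpolyC1 mderivC mulr0n.
elim: k => [|k IH]; first by rewrite expr1 expr0 mulr1.
by rewrite exprS mderivM IH !exprS /=; ring.
Qed.

Lemma mderiv_dhomog d p i : p \is d.-homog -> p^`M(i) \is d.-1.-homog.
Proof.
move=> /dhomogP p_homog; apply/dhomogP => m.
rewrite mcoeff_msupp mcoeff_mderiv => m_supp.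
have: p@_(m + U_(i)) != 0 by apply: contra m_supp => /eqP ->; rewrite mul0rn.
by rewrite -mcoeff_msupp => /p_homog /=; rewrite mdegD mdeg1 addn1 => <-.
Qed.

Lemma meval_dhomog_scale d p (c : K) (x : 'I_n -> K) : p \is d.-homog ->
  p.@[fun i => c * x i] = c ^+ d * p.@[x].
Proof.
move=> /dhomogP p_homog; rewrite !mevalE mulr_sumr; apply: eq_big_seq => m m_supp.
rewrite mulrCA -(p_homog m m_supp) /= mdegE -prodrXr -big_split /=.
by congr (_ * _); apply: eq_bigr => i _; rewrite exprMn.
Qed.

Lemma meval0_dhomog d p : p \is d.-homog -> (0 < d)%N -> p.@[fun _ => 0] = 0.
Proof.
move=> p_homog d_gt0; have := meval_dhomog_scale 0 (fun _ => 0) p_homog.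
by rewrite expr0n gtn_eqF //= !mul0r.
Qed.

Lemma euler_mpolyX (m : 'X_{1..n}) :
  \sum_(i < n) 'X_i * ('X_[m] : {mpoly K[n]})^`M(i) = 'X_[m] *+ mdeg m.
Proof.
rewrite mdegE -sumrMnr; apply: eq_bigr => i _.
rewrite mderivX -scalerAr -mpolyXD.
have [->|m_i_gt0] := posnP (m i); first by rewrite scale0r mulr0n.
rewrite addmC submK ?scaler_nat //.
by apply/mnm_lepP => l; rewrite mnm1E; case: eqP => [<-|].
Qed.

Lemma euler_dhomog d p : p \is d.-homog -> \sum_(i < n) 'X_i * p^`M(i) = p *+ d.
Proof.
move=> /dhomogP p_homog; rewrite {2}[p]mpolyE -sumrMnl.
under eq_bigr => i _ do rewrite {1}[p]mpolyE raddf_sum mulr_sumr.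
rewrite exchange_big /=; apply: eq_big_seq => m m_supp.
rewrite -(p_homog m m_supp) scalerMnr -euler_mpolyX scaler_sumr.
by apply: eq_bigr => i _; rewrite mderivZ scalerAr.
Qed.

End MpolyCalculus.

Section ChainRule.
Variables (K : comNzRingType) (n k : nat) (lq : n.-tuple {mpoly K[k]}).
Implicit Types p q : {mpoly K[n]}.

Let chain_rule p := forall j, (p \mPo lq)^`M(j) =
  \sum_(i < n) (p^`M(i) \mPo lq) * (tnth lq i)^`M(j).

Let chain_ruleD p q : chain_rule p -> chain_rule q -> chain_rule (p + q).
Proof.
move=> hp hq j; rewrite raddfD /= mderivD hp hq -big_split /=.
by apply: eq_bigr => i _; rewrite mderivD raddfD /= mulrDl.
Qed.

Let chain_ruleZ c p : chain_rule p -> chain_rule (c *: p).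
Proof.
move=> hp j; rewrite comp_mpolyZ mderivZ hp scaler_sumr.
by apply: eq_bigr => i _; rewrite mderivZ comp_mpolyZ scalerAl.
Qed.

Let chain_ruleM p q : chain_rule p -> chain_rule q -> chain_rule (p * q).
Proof.
move=> hp hq j; rewrite rmorphM mderivM hp hq mulr_suml mulr_sumr -big_split /=.
by apply: eq_bigr => i _; rewrite mderivM rmorphD !rmorphM /=; ring.
Qed.

Let chain_rule1 : chain_rule 1.
Proof.
move=> j; rewrite rmorph1 -mpolyC1 mderivC big1 // => i _.
by rewrite mderivC comp_mpoly0 mul0r.
Qed.

Let chain_ruleX (l : 'I_n) : chain_rule 'X_l.
Proof.
move=> j; rewrite comp_mpolyXU (bigD1 l) //= big1 => [|i /negbTE il].
  by rewrite mderivXU eqxx rmorph1 mul1r addr0 (tnth_nth 0).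
by rewrite mderivXU eq_sym il comp_mpoly0 mul0r.
Qed.

Lemma mderiv_comp p j : (p \mPo lq)^`M(j) =
  \sum_(i < n) (p^`M(i) \mPo lq) * (tnth lq i)^`M(j).
Proof.
move: j; rewrite -/(chain_rule p) [p]mpolyE.
elim: (msupp p) => [|m s IH]; first by rewrite big_nil -(scale0r 1); exact: chain_ruleZ.
rewrite big_cons; apply: chain_ruleD => //; apply: chain_ruleZ.
rewrite mpolyXE_id; apply: (big_ind chain_rule chain_rule1 chain_ruleM) => i _.
by elim: (m i) => [|e IHe]; rewrite ?expr0 // exprS; exact: chain_ruleM (chain_ruleX i) IHe.
Qed.

End ChainRule.

Section CharacteristicNumbers.
Variable C : numClosedFieldType.
Implicit Type J : 'M[C]_2.

Lemma eigenvalue_mx2 J l : eigenvalue J l ->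
  l ^+ 2 - (J 0 0 + J 1 1) * l + (J 0 0 * J 1 1 - J 0 1 * J 1 0) = 0.
Proof.
case/eigenvalueP => v /rowP hv v_neq0.
have E k : v 0 0 * J 0 k + v 0 1 * J 1 k - l * v 0 k = 0.
  move: (hv k); rewrite !mxE !big_ord_recl big_ord0 addr0 => <-.
  have [-> ->] : (ord0 : 'I_2) = 0 /\ (lift ord0 ord0 : 'I_2) = 1 by split; apply: val_inj.
  by rewrite subrr.
set ch := _ + _; apply/eqP; apply: contraNT v_neq0 => ch_neq0.
have ch_v0 : ch * v 0 0 = (J 1 1 - l) * (v 0 0 * J 0 0 + v 0 1 * J 1 0 - l * v 0 0)
    - J 1 0 * (v 0 0 * J 0 1 + v 0 1 * J 1 1 - l * v 0 1) by rewrite /ch; ring.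
have ch_v1 : ch * v 0 1 = (J 0 0 - l) * (v 0 0 * J 0 1 + v 0 1 * J 1 1 - l * v 0 1)
    - J 0 1 * (v 0 0 * J 0 0 + v 0 1 * J 1 0 - l * v 0 0) by rewrite /ch; ring.
rewrite !E !mulr0 subr0 in ch_v0 ch_v1.
apply/eqP/rowP => -[[|[|//]] i_lt]; rewrite mxE; apply/eqP;
  [move/eqP: ch_v0 | move/eqP: ch_v1]; rewrite mulf_eq0 (negbTE ch_neq0) /=;
  by congr (v 0 _ == 0); apply: val_inj.
Qed.

Lemma traceless_not_nondeg_nonreal J : J 0 0 + J 1 1 = 0 -> ~ nondeg_nonreal J.
Proof.
move=> tr0 [_ [l1 [l2 [/eigenvalue_mx2 e1 /eigenvalue_mx2 e2 _ l2_neq0 ratio_nonreal]]]].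
have sqrE l : l ^+ 2 - (J 0 0 + J 1 1) * l + (J 0 0 * J 1 1 - J 0 1 * J 1 0) = 0 ->
    l ^+ 2 = J 0 1 * J 1 0 - J 0 0 * J 1 1.
  by rewrite tr0 mul0r subr0 => /eqP; rewrite addr_eq0 opprB => /eqP.
have : (l1 / l2) ^+ 2 == 1.
  by rewrite expr_div_n (sqrE _ e1) -(sqrE _ e2) divff // expf_neq0.
by rewrite sqrf_eq1 => /orP[] /eqP ratioE; rewrite ratioE ?realN real1 in ratio_nonreal.
Qed.

Lemma triangular_not_nondeg_nonreal J (k : nat) :
  J 1 0 = 0 -> J 1 1 = - (k%:R * J 0 0) -> ~ nondeg_nonreal J.
Proof.
move=> J10 J11 [_ [l1 [l2 [e1 e2 _ l2_neq0 ratio_nonreal]]]].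
have real_multiple l : eigenvalue J l -> exists2 r, r \is Num.real & l = r * J 0 0.
  move/eigenvalue_mx2; rewrite J10 J11 mulr0 subr0.
  have -> : l ^+ 2 - (J 0 0 + - (k%:R * J 0 0)) * l + J 0 0 * - (k%:R * J 0 0)
      = (l - J 0 0) * (l + k%:R * J 0 0) by ring.
  move/eqP; rewrite mulf_eq0 => /orP[]; [rewrite subr_eq0 | rewrite addr_eq0] => /eqP ->.
    by exists 1; rewrite ?real1 ?mul1r.
  by exists (- k%:R); rewrite ?realN ?realn ?mulNr.
have [r1 r1_real l1E] := real_multiple _ e1; have [r2 r2_real l2E] := real_multiple _ e2.
move: ratio_nonreal l2_neq0; rewrite l1E l2E mulf_eq0 negb_or => + /andP[r2_neq0 J00_neq0].
by rewrite (_ : _ / _ = r1 / r2) ?rpred_div //; field; rewrite r2_neq0 J00_neq0.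
Qed.

End CharacteristicNumbers.

Lemma eigenvalue_mx0 (F : fieldType) (m : nat) (a : F) :
  eigenvalue (0 : 'M[F]_m) a -> a = 0.
Proof.
case/eigenvalueP => v; rewrite mulmx0 => /esym/eqP; rewrite scaler_eq0.
by case/orP => [/eqP //|->].
Qed.

Local Notation o0 := (inord 0 : 'I_3).
Local Notation o1 := (inord 1 : 'I_3).
Local Notation o2 := (inord 2 : 'I_3).

Lemma val_o0 : (o0 : nat) = 0%N. Proof. by rewrite inordK. Qed.
Lemma val_o1 : (o1 : nat) = 1%N. Proof. by rewrite inordK. Qed.
Lemma val_o2 : (o2 : nat) = 2%N. Proof. by rewrite inordK. Qed.
Lemma eq_o01 : (o0 == o1) = false. Proof. by rewrite -val_eqE /= val_o0 val_o1. Qed.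
Lemma eq_o02 : (o0 == o2) = false. Proof. by rewrite -val_eqE /= val_o0 val_o2. Qed.
Lemma eq_o12 : (o1 == o2) = false. Proof. by rewrite -val_eqE /= val_o1 val_o2. Qed.
Lemma eq_o10 : (o1 == o0) = false. Proof. by rewrite eq_sym eq_o01. Qed.
Lemma eq_o20 : (o2 == o0) = false. Proof. by rewrite eq_sym eq_o02. Qed.
Lemma eq_o21 : (o2 == o1) = false. Proof. by rewrite eq_sym eq_o12. Qed.

Lemma forall_ord3 (P : 'I_3 -> Prop) : P o0 -> P o1 -> P o2 -> forall i, P i.
Proof.
move=> P0 P1 P2 [[|[|[|//]]] i_lt].
- by rewrite (_ : Ordinal i_lt = o0) //; apply: val_inj; rewrite /= val_o0.
- by rewrite (_ : Ordinal i_lt = o1) //; apply: val_inj; rewrite /= val_o1.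
- by rewrite (_ : Ordinal i_lt = o2) //; apply: val_inj; rewrite /= val_o2.
Qed.

Lemma big_ord3 (V : nmodType) (F : 'I_3 -> V) :
  \sum_(i < 3) F i = F o0 + F o1 + F o2.
Proof.
rewrite !big_ord_recr big_ord0 /= add0r.
by congr (F _ + F _ + F _); apply: val_inj; rewrite /= inordK.
Qed.

Lemma chart_a0 : chart_a o0 = o1. Proof. by rewrite /chart_a val_o0. Qed.
Lemma chart_b0 : chart_b o0 = o2. Proof. by rewrite /chart_b val_o0. Qed.
Lemma chart_a1 : chart_a o1 = o0. Proof. by rewrite /chart_a val_o1. Qed.
Lemma chart_b1 : chart_b o1 = o2. Proof. by rewrite /chart_b val_o1. Qed.
Lemma chart_a2 : chart_a o2 = o0. Proof. by rewrite /chart_a val_o2. Qed.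
Lemma chart_b2 : chart_b o2 = o1. Proof. by rewrite /chart_b val_o2. Qed.

Section PullbackForm.
Variables (C : numClosedFieldType) (g : nat).
Local Notation t := (subst_g C g.+1).
Local Notation X0 := ('X_o0 : {mpoly C[3]}).
Local Notation X1 := ('X_o1 : {mpoly C[3]}).
Local Notation X2 := ('X_o2 : {mpoly C[3]}).
Implicit Types p q : {mpoly C[3]}.

Lemma tnth_subst_g0 : tnth t o0 = X0. Proof. by rewrite (tnth_nth 0) val_o0. Qed.
Lemma tnth_subst_g1 : tnth t o1 = X1. Proof. by rewrite (tnth_nth 0) val_o1. Qed.
Lemma tnth_subst_g2 : tnth t o2 = X2 ^+ g.+1. Proof. by rewrite (tnth_nth 0) val_o2. Qed.

Lemma mderiv_subst_g p j : (p \mPo t)^`M(j) = (p^`M(o0) \mPo t) * X0^`M(j)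
  + (p^`M(o1) \mPo t) * X1^`M(j) + (p^`M(o2) \mPo t) * (X2 ^+ g.+1)^`M(j).
Proof. by rewrite mderiv_comp big_ord3 tnth_subst_g0 tnth_subst_g1 tnth_subst_g2. Qed.

Lemma mderiv_subst_g0 p : (p \mPo t)^`M(o0) = p^`M(o0) \mPo t.
Proof. by rewrite mderiv_subst_g mderiv_exp !mderivXU eqxx eq_o10 eq_o20 /=; ring. Qed.
Lemma mderiv_subst_g1 p : (p \mPo t)^`M(o1) = p^`M(o1) \mPo t.
Proof. by rewrite mderiv_subst_g mderiv_exp !mderivXU eqxx eq_o01 eq_o21 /=; ring. Qed.
Lemma mderiv_subst_g2 p : (p \mPo t)^`M(o2) = (p^`M(o2) \mPo t) * (X2 ^+ g *+ g.+1).
Proof. by rewrite mderiv_subst_g mderiv_exp !mderivXU eqxx eq_o02 eq_o12 /=; ring. Qed.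

Variables A B Cc : {mpoly C[3]}.
Local Notation eta := (eta_form g.+1 A B Cc).

Lemma eta_form0 : eta o0 = X2 * (A \mPo t). Proof. by rewrite /eta_form val_o0. Qed.
Lemma eta_form1 : eta o1 = X2 * (B \mPo t). Proof. by rewrite /eta_form val_o1. Qed.
Lemma eta_form2 : eta o2 = (Cc \mPo t) *+ g.+1.
Proof. by rewrite /eta_form val_o2 scaler_nat. Qed.

Lemma d1form_eta0 : d1form eta o0 = (Cc^`M(o1) \mPo t) *+ g.+1 - (B \mPo t)
   - X2 * (B^`M(o2) \mPo t) * X2 ^+ g *+ g.+1.
Proof.
rewrite /d1form val_o0 /= eta_form1 eta_form2 mderivMn mderivM.
by rewrite mderiv_subst_g1 mderiv_subst_g2 !mderivXU ?eqxx ?eq_o21 /=; ring.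
Qed.
Lemma d1form_eta1 : d1form eta o1 = (Cc^`M(o0) \mPo t) *+ g.+1 - (A \mPo t)
   - X2 * (A^`M(o2) \mPo t) * X2 ^+ g *+ g.+1.
Proof.
rewrite /d1form val_o1 /= eta_form0 eta_form2 mderivMn mderivM.
by rewrite mderiv_subst_g0 mderiv_subst_g2 !mderivXU ?eqxx ?eq_o20 /=; ring.
Qed.
Lemma d1form_eta2 : d1form eta o2 = X2 * (B^`M(o0) \mPo t) - X2 * (A^`M(o1) \mPo t).
Proof.
rewrite /d1form val_o2 /= eta_form0 eta_form1 !mderivM.
by rewrite mderiv_subst_g0 mderiv_subst_g1 !mderivXU ?eq_o20 ?eq_o21 /=; ring.
Qed.

Variable d : nat.
Hypotheses (hA : A \is d.-homog) (hB : B \is d.-homog) (hC : Cc \is d.+1.-homog)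
  (hEuler : X0 * A + X1 * B + Cc = 0).

Lemma euler_relation_dX : A + X0 * A^`M(o0) + X1 * B^`M(o0) + Cc^`M(o0) = 0.
Proof.
have := congr1 (mderiv o0) hEuler.
by rewrite mderiv0 !mderivD !mderivM !mderivXU eqxx eq_o10 /= => <-; ring.
Qed.
Lemma euler_relation_dY : X0 * A^`M(o1) + B + X1 * B^`M(o1) + Cc^`M(o1) = 0.
Proof.
have := congr1 (mderiv o1) hEuler.
by rewrite mderiv0 !mderivD !mderivM !mderivXU eqxx eq_o01 /= => <-; ring.
Qed.

Lemma euler_A : X0 * A^`M(o0) + X1 * A^`M(o1) + X2 * A^`M(o2) = A *+ d.
Proof. by rewrite -(euler_dhomog hA) big_ord3. Qed.
Lemma euler_B : X0 * B^`M(o0) + X1 * B^`M(o1) + X2 * B^`M(o2) = B *+ d.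
Proof. by rewrite -(euler_dhomog hB) big_ord3. Qed.
Lemma euler_C : X0 * Cc^`M(o0) + X1 * Cc^`M(o1) + X2 * Cc^`M(o2) = Cc *+ d.+1.
Proof. by rewrite -(euler_dhomog hC) big_ord3. Qed.

(* (omega /\ d omega) / Z for omega = ZA dX + ZB dY + C dZ; its pullback along
   (X, Y, Z^gamma) is eta /\ d eta. *)
Lemma omG_integrability : A * Cc^`M(o1) - X2 * A * B^`M(o2) - B * Cc^`M(o0)
   + X2 * B * A^`M(o2) + Cc * B^`M(o0) - Cc * A^`M(o1) = 0.
Proof.
have -> : A * Cc^`M(o1) - X2 * A * B^`M(o2) - B * Cc^`M(o0) + X2 * B * A^`M(o2)
   + Cc * B^`M(o0) - Cc * A^`M(o1) =
   A * (X0 * A^`M(o1) + B + X1 * B^`M(o1) + Cc^`M(o1))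
 - B * (A + X0 * A^`M(o0) + X1 * B^`M(o0) + Cc^`M(o0))
 + (B^`M(o0) - A^`M(o1)) * (X0 * A + X1 * B + Cc)
 + B * (X0 * A^`M(o0) + X1 * A^`M(o1) + X2 * A^`M(o2) - A *+ d)
 - A * (X0 * B^`M(o0) + X1 * B^`M(o1) + X2 * B^`M(o2) - B *+ d) by ring.
by rewrite euler_relation_dX euler_relation_dY euler_A euler_B hEuler
  !(subrr, mulr0, subr0, addr0).
Qed.

Lemma eta_integrable : integrable eta.
Proof.
rewrite /integrable eta_form0 eta_form1 eta_form2 d1form_eta0 d1form_eta1 d1form_eta2.
have := congr1 (comp_mpoly t) omG_integrability.
rewrite rmorph0 !rmorphD !rmorphN !rmorphM /= !comp_mpolyXU val_o2 /= exprS => pulled.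
by rewrite -[RHS](mulr0 (X2 *+ g.+1)) -pulled; ring.
Qed.

End PullbackForm.

Section SecondOrderVanishing.
Variable C : numClosedFieldType.
Local Notation O := (origin3 C).
Implicit Types p q : {mpoly C[3]}.

Definition vanishes2 p := p.@[O] = 0 /\ forall j, p^`M(j).@[O] = 0.

Lemma vanishes2D p q : vanishes2 p -> vanishes2 q -> vanishes2 (p + q).
Proof.
by move=> [p0 dp0] [q0 dq0]; split=> [|j];
  rewrite ?mderivD mevalD ?p0 ?q0 ?dp0 ?dq0 addr0.
Qed.

Lemma vanishes2N p : vanishes2 p -> vanishes2 (- p).
Proof. by move=> [p0 dp0]; split=> [|j]; rewrite ?mderivN mevalN ?p0 ?dp0 oppr0. Qed.

Lemma vanishes2B p q : vanishes2 p -> vanishes2 q -> vanishes2 (p - q).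
Proof. by move=> vp vq; apply/vanishes2D/vanishes2N. Qed.

Lemma vanishes2Mn p k : vanishes2 p -> vanishes2 (p *+ k).
Proof. by move=> [p0 dp0]; split=> [|j]; rewrite ?mderivMn mevalMn ?p0 ?dp0 mul0rn. Qed.

Lemma vanishes2Ml p q : vanishes2 p -> vanishes2 (p * q).
Proof.
by move=> [p0 dp0]; split=> [|j];
  rewrite ?mderivM ?mevalD !mevalM ?p0 ?dp0 !mul0r ?mulr0 ?addr0.
Qed.

Lemma vanishes2M p q : p.@[O] = 0 -> q.@[O] = 0 -> vanishes2 (p * q).
Proof.
by move=> p0 q0; split=> [|j];
  rewrite ?mderivM ?mevalD !mevalM ?p0 ?q0 !mul0r ?mulr0 ?addr0.
Qed.

End SecondOrderVanishing.

Section QuasiHomogeneity.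
Variables (C : numClosedFieldType) (g : nat) (A B Cc : {mpoly C[3]}) (d : nat).
Hypotheses (hA : A \is d.-homog) (hB : B \is d.-homog) (hC : Cc \is d.+1.-homog)
  (hEuler : 'X_o0 * A + 'X_o1 * B + Cc = 0) (hd : (1 < d)%N).
Local Notation t := (subst_g C g.+1).
Local Notation eta := (eta_form g.+1 A B Cc).
Local Notation X2 := ('X_o2 : {mpoly C[3]}).
Local Notation O := (origin3 C).
Implicit Types p q : {mpoly C[3]}.

Definition subst_pt (x : 'I_3 -> C) : 'I_3 -> C := fun i => (tnth t i).@[x].

Lemma meval_subst_g p x : (p \mPo t).@[x] = p.@[subst_pt x].
Proof. exact: comp_mpoly_meval. Qed.

Lemma subst_pt0 x : subst_pt x o0 = x o0.
Proof. by rewrite /subst_pt tnth_subst_g0 mevalXU. Qed.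
Lemma subst_pt1 x : subst_pt x o1 = x o1.
Proof. by rewrite /subst_pt tnth_subst_g1 mevalXU. Qed.
Lemma subst_pt2 x : subst_pt x o2 = x o2 ^+ g.+1.
Proof. by rewrite /subst_pt tnth_subst_g2 rmorphXn /= mevalXU. Qed.

Lemma meval0_subst_dhomog e p : p \is e.-homog -> (0 < e)%N -> (p \mPo t).@[O] = 0.
Proof.
move=> p_homog e_gt0; rewrite meval_subst_g -(meval0_dhomog p_homog e_gt0).
apply: meval_eq; apply: forall_ord3;
  by rewrite ?subst_pt0 ?subst_pt1 ?subst_pt2 /origin3 ?expr0n.
Qed.

Lemma meval0_subst_mderiv e p j : p \is e.-homog -> (1 < e)%N ->
  (p^`M(j) \mPo t).@[O] = 0.
Proof.
move=> p_homog e_gt1; rewrite (meval0_subst_dhomog (mderiv_dhomog j p_homog)) //.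
by rewrite -ltnS prednK // ltnW.
Qed.

Lemma vanishes2_subst_dhomog e p : p \is e.-homog -> (1 < e)%N -> vanishes2 (p \mPo t).
Proof.
move=> p_homog e_gt1; split=> [|j]; first by rewrite (meval0_subst_dhomog p_homog) // ltnW.
by rewrite mderiv_subst_g !mevalD !mevalM !(meval0_subst_mderiv _ p_homog) // !mul0r !addr0.
Qed.

Definition Zfield : 'I_3 -> {mpoly C[3]} :=
  fun k => nth 0 [:: d1form eta o0; - d1form eta o1; d1form eta o2] k.

Lemma Zfield0 : Zfield o0 = d1form eta o0. Proof. by rewrite /Zfield val_o0. Qed.
Lemma Zfield1 : Zfield o1 = - d1form eta o1. Proof. by rewrite /Zfield val_o1. Qed.
Lemma Zfield2 : Zfield o2 = d1form eta o2. Proof. by rewrite /Zfield val_o2. Qed.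

Lemma d1form_eta_contr : d1form eta = contr 1 Zfield.
Proof.
apply: functional_extensionality; apply: forall_ord3;
  by rewrite /contr ?val_o0 ?val_o1 ?val_o2 /= ?Zfield0 ?Zfield1 ?Zfield2 !mul1r ?opprK.
Qed.

Lemma Zfield_vanishes2 i : vanishes2 (Zfield i).
Proof.
have X2_0 : X2.@[O] = 0 by rewrite mevalXU.
have dhomog_d1 j p : p \is d.-homog -> (p^`M(j) \mPo t).@[O] = 0.
  by move=> p_homog; exact: meval0_subst_mderiv p_homog hd.
have dC j : vanishes2 (Cc^`M(j) \mPo t).
  exact: vanishes2_subst_dhomog (mderiv_dhomog j hC) _.
move: i; apply: forall_ord3; rewrite ?Zfield0 ?Zfield1 ?Zfield2.
- rewrite d1form_eta0; apply: vanishes2B; first apply: vanishes2B.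
  + exact/vanishes2Mn/dC.
  + exact: vanishes2_subst_dhomog hB hd.
  + exact/vanishes2Mn/vanishes2Ml/vanishes2M/dhomog_d1.
- rewrite d1form_eta1; apply/vanishes2N/vanishes2B; first apply: vanishes2B.
  + exact/vanishes2Mn/dC.
  + exact: vanishes2_subst_dhomog hA hd.
  + exact/vanishes2Mn/vanishes2Ml/vanishes2M/dhomog_d1.
- by rewrite d1form_eta2; apply: vanishes2B; apply: vanishes2M; rewrite ?dhomog_d1.
Qed.

Lemma DZ0_Zfield : DZ0 Zfield = 0.
Proof. by apply/matrixP => i j; rewrite !mxE; case: (Zfield_vanishes2 i). Qed.

Lemma omG0 : omG A B Cc o0 = X2 * A. Proof. by rewrite /omG val_o0. Qed.
Lemma omG1 : omG A B Cc o1 = X2 * B. Proof. by rewrite /omG val_o1. Qed.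
Lemma omG2 : omG A B Cc o2 = Cc. Proof. by rewrite /omG val_o2. Qed.

Lemma meval_chart e p (q : 'I_3 -> C) k : p \is e.-homog ->
  p.@[fun i => q i / q k] = (q k)^-1 ^+ e * p.@[q].
Proof.
move=> p_homog; rewrite -(meval_dhomog_scale _ _ p_homog).
by apply: meval_eq => i; rewrite mulrC.
Qed.

Lemma singG_zeros (q : 'I_3 -> C) : nonzero_pt q ->
  q o2 * A.@[q] = 0 -> q o2 * B.@[q] = 0 -> Cc.@[q] = 0 -> singG A B Cc q.
Proof.
move=> q_neq0 qA qB qC; split => //.
by apply: forall_ord3; rewrite ?omG0 ?omG1 ?omG2 ?mevalM ?mevalXU.
Qed.

Hypothesis hsing : forall q : 'I_3 -> C, singG A B Cc q ->
  forall k : 'I_3, q k != 0 -> nondeg_nonreal (lin_part (omG A B Cc) k q).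

Section ZeroLocus.
Variable x : 'I_3 -> C.
Hypothesis Zx0 : forall i, (Zfield i).@[x] = 0.
Local Notation q := (subst_pt x).
Local Notation a := (A.@[q]).
Local Notation b := (B.@[q]).
Local Notation c := (Cc.@[q]).
Local Notation aX := ((A^`M(o0)).@[q]).
Local Notation aY := ((A^`M(o1)).@[q]).
Local Notation aZ := ((A^`M(o2)).@[q]).
Local Notation bX := ((B^`M(o0)).@[q]).
Local Notation bY := ((B^`M(o1)).@[q]).
Local Notation bZ := ((B^`M(o2)).@[q]).
Local Notation cX := ((Cc^`M(o0)).@[q]).
Local Notation cY := ((Cc^`M(o1)).@[q]).
Local Notation cZ := ((Cc^`M(o2)).@[q]).
Local Notation x0 := (x o0).
Local Notation x1 := (x o1).
Local Notation x2 := (x o2).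

Lemma euler_relation_q : x0 * a + x1 * b + c = 0.
Proof.
move: (congr1 (meval q) hEuler).
by rewrite !(mevalD, mevalM, mevalXU) subst_pt0 subst_pt1 meval0.
Qed.
Lemma euler_relation_dX_q : a + x0 * aX + x1 * bX + cX = 0.
Proof.
move: (congr1 (meval q) (euler_relation_dX hEuler)).
by rewrite !(mevalD, mevalM, mevalXU) subst_pt0 subst_pt1 meval0.
Qed.
Lemma euler_relation_dY_q : x0 * aY + b + x1 * bY + cY = 0.
Proof.
move: (congr1 (meval q) (euler_relation_dY hEuler)).
by rewrite !(mevalD, mevalM, mevalXU) subst_pt0 subst_pt1 meval0.
Qed.
Lemma euler_A_q : x0 * aX + x1 * aY + x2 * x2 ^+ g * aZ = a *+ d.
Proof.
move: (congr1 (meval q) (euler_A hA)).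
by rewrite !(mevalD, mevalM, mevalMn, mevalXU) subst_pt0 subst_pt1 subst_pt2 exprS.
Qed.
Lemma euler_B_q : x0 * bX + x1 * bY + x2 * x2 ^+ g * bZ = b *+ d.
Proof.
move: (congr1 (meval q) (euler_B hB)).
by rewrite !(mevalD, mevalM, mevalMn, mevalXU) subst_pt0 subst_pt1 subst_pt2 exprS.
Qed.
Lemma euler_C_q : x0 * cX + x1 * cY + x2 * x2 ^+ g * cZ = c *+ d.+1.
Proof.
move: (congr1 (meval q) (euler_C hC)).
by rewrite !(mevalD, mevalM, mevalMn, mevalXU) subst_pt0 subst_pt1 subst_pt2 exprS.
Qed.

Lemma Zfield0_q : cY *+ g.+1 - b - x2 * bZ * x2 ^+ g *+ g.+1 = 0.
Proof.
move: (Zx0 o0); rewrite Zfield0 d1form_eta0.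
by rewrite !(mevalB, mevalMn, mevalM, meval_subst_g) ?rmorphXn /= !mevalXU.
Qed.
Lemma Zfield1_q : cX *+ g.+1 - a - x2 * aZ * x2 ^+ g *+ g.+1 = 0.
Proof.
move: (Zx0 o1); rewrite Zfield1 d1form_eta1 mevalN => /eqP; rewrite oppr_eq0 => /eqP.
by rewrite !(mevalB, mevalMn, mevalM, meval_subst_g) ?rmorphXn /= !mevalXU.
Qed.
Lemma Zfield2_q : x2 * bX - x2 * aY = 0.
Proof.
move: (Zx0 o2); rewrite Zfield2 d1form_eta2.
by rewrite !(mevalB, mevalMn, mevalM, meval_subst_g) ?rmorphXn /= !mevalXU.
Qed.

Lemma Zfield_zero_x2 : x2 = 0.
Proof.
have [//|x2_neq0] := eqVneq x2 0; exfalso.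
have q2_neq0 : q o2 != 0 by rewrite subst_pt2 expf_neq0.
have bX_aY : bX = aY.
  by move/eqP: Zfield2_q; rewrite -mulrBr mulf_eq0 (negbTE x2_neq0) subr_eq0 => /eqP.
have a0 : a = 0.
  have : a *+ (g.+1 * d.+1).+1 = (a + x0 * aX + x1 * bX + cX) *+ g.+1
      - (cX *+ g.+1 - a - x2 * aZ * x2 ^+ g *+ g.+1)
      - (x0 * aX + x1 * aY + x2 * x2 ^+ g * aZ - a *+ d) *+ g.+1
      - x1 *+ g.+1 * (bX - aY) by ring.
  rewrite euler_relation_dX_q Zfield1_q euler_A_q bX_aY !subrr !(mul0rn, mulr0, subr0).
  by move/eqP; rewrite mulrn_eq0 /= => /eqP.
have b0 : b = 0.
  have : b *+ (g.+1 * d.+1).+1 = (x0 * aY + b + x1 * bY + cY) *+ g.+1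
      - (cY *+ g.+1 - b - x2 * bZ * x2 ^+ g *+ g.+1)
      - (x0 * bX + x1 * bY + x2 * x2 ^+ g * bZ - b *+ d) *+ g.+1
      - x0 *+ g.+1 * (aY - bX) by ring.
  rewrite euler_relation_dY_q Zfield0_q euler_B_q bX_aY !subrr !(mul0rn, mulr0, subr0).
  by move/eqP; rewrite mulrn_eq0 /= => /eqP.
have c0 : c = 0 by move: euler_relation_q; rewrite a0 b0 !mulr0 !add0r.
have q_sing : singG A B Cc q by apply: singG_zeros; rewrite ?a0 ?b0 ?mulr0 //; exists o2.
apply: (traceless_not_nondeg_nonreal _ (hsing q_sing q2_neq0)).
(* In the chart x2 = 1 the trace is (B_X - A_Y) at q, up to a power of q2. *)
rewrite /lin_part !mxE /= ?chart_a2 ?chart_b2 omG0 omG1 !mderivM !mderivXU eq_o20 eq_o21.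
have dB_dA : B^`M(o0) - A^`M(o1) \is d.-1.-homog.
  by rewrite rpredB // mderiv_dhomog.
rewrite !mul0r !add0r !mevalM -mulrBr -mevalB (meval_chart _ _ dB_dA).
by rewrite mevalB bX_aY subrr !mulr0.
Qed.

Lemma Zfield_zero_q2 : q o2 = 0.
Proof. by rewrite subst_pt2 Zfield_zero_x2 expr0n. Qed.

Lemma Zfield_zero_a : a = cX *+ g.+1.
Proof.
apply/esym/eqP; rewrite -subr_eq0.
by move: Zfield1_q; rewrite Zfield_zero_x2 !mul0r mul0rn subr0 => ->.
Qed.

Lemma Zfield_zero_b : b = cY *+ g.+1.
Proof.
apply/esym/eqP; rewrite -subr_eq0.
by move: Zfield0_q; rewrite Zfield_zero_x2 !mul0r mul0rn subr0 => ->.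
Qed.

Lemma Zfield_zero_c : c = 0.
Proof.
have : c *+ (g.+1 * d.+1).+1 = (x0 * a + x1 * b + c) + x0 * (cX *+ g.+1 - a)
    + x1 * (cY *+ g.+1 - b) - (x0 * cX + x1 * cY + x2 * x2 ^+ g * cZ - c *+ d.+1) *+ g.+1.
  by rewrite Zfield_zero_x2; ring.
rewrite euler_relation_q euler_C_q -Zfield_zero_a -Zfield_zero_b.
rewrite !subrr !(mul0rn, mulr0, subr0, addr0).
by move/eqP; rewrite mulrn_eq0 /= => /eqP.
Qed.

Lemma Zfield_zero_singular : nonzero_pt q -> singG A B Cc q.
Proof.
by move=> q_neq0; apply: singG_zeros; rewrite ?Zfield_zero_q2 ?mul0r ?Zfield_zero_c.
Qed.

Lemma Zfield_zero_x0 : x0 = 0.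
Proof.
have [//|x0_neq0] := eqVneq x0 0; exfalso.
have q0_neq0 : q o0 != 0 by rewrite subst_pt0.
have q_sing : singG A B Cc q by apply: Zfield_zero_singular; exists o0.
apply: (triangular_not_nondeg_nonreal (k := g.+1) _ _ (hsing q_sing q0_neq0)).
  rewrite /lin_part !mxE /= ?chart_a0 ?chart_b0 omG1 mderivM mderivXU eq_o21.
  by rewrite mul0r add0r mevalM mevalXU Zfield_zero_q2 !mul0r oppr0.
rewrite /lin_part !mxE /= ?chart_a0 ?chart_b0 omG1 omG2 mderivM mderivXU eqxx.
rewrite mevalD !mevalM mevalXU Zfield_zero_q2 meval1.
rewrite (meval_chart _ _ hB) (meval_chart _ _ (mderiv_dhomog _ hC)) Zfield_zero_b.
by rewrite /=; ring.
Qed.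

Lemma Zfield_zero_x1 : x1 = 0.
Proof.
have [//|x1_neq0] := eqVneq x1 0; exfalso.
have q1_neq0 : q o1 != 0 by rewrite subst_pt1.
have q_sing : singG A B Cc q by apply: Zfield_zero_singular; exists o1.
apply: (triangular_not_nondeg_nonreal (k := g.+1) _ _ (hsing q_sing q1_neq0)).
  rewrite /lin_part !mxE /= ?chart_a1 ?chart_b1 omG0 mderivM mderivXU eq_o20.
  by rewrite mul0r add0r mevalM mevalXU Zfield_zero_q2 !mul0r oppr0.
rewrite /lin_part !mxE /= ?chart_a1 ?chart_b1 omG0 omG2 mderivM mderivXU eqxx.
rewrite mevalD !mevalM mevalXU Zfield_zero_q2 meval1.
rewrite (meval_chart _ _ hA) (meval_chart _ _ (mderiv_dhomog _ hC)) Zfield_zero_a.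
by rewrite /=; ring.
Qed.

End ZeroLocus.

Lemma Zfield_isolated_zero : isolated_zero Zfield.
Proof.
split=> [i|]; first by case: (Zfield_vanishes2 i).
(* Z has no zero besides the origin, so any radius works. *)
exists 1; split=> [|x _ Zx0]; first exact: ltr01.
apply: forall_ord3;
  [exact: Zfield_zero_x0 | exact: Zfield_zero_x1 | exact: Zfield_zero_x2].
Qed.

Theorem eta_qh_singularity : qh_singularity eta.
Proof.
split; first exact: eta_integrable hA hB hEuler.
exists Zfield; split; first exact: d1form_eta_contr.
  exact: Zfield_isolated_zero.
by rewrite DZ0_Zfield; exact: eigenvalue_mx0.
Qed.

End QuasiHomogeneity.

Theorem lemma5p6
  (R : realType)
  (* the map f = (F0 : F1 : F2^gamma) : P^3 --> P^2 *)
  (F0 F1 F2 : {mpoly R[i][4]}) (gamma nu e2 : nat)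
  (hgamma : (2 <= gamma)%N) (hnu : (2 <= nu)%N) (hnu_e2 : nu = (gamma * e2)%N)
  (hF0 : F0 \is nu.-homog) (hF1 : F1 \is nu.-homog) (hF2 : F2 \is e2.-homog)
  (hF0nz : F0 != 0) (hF1nz : F1 != 0) (hF2nz : F2 != 0)
  (hFcop : forall H : {mpoly R[i][4]},
      mdvd H F0 -> mdvd H F1 -> mdvd H F2 -> mconst H)
  (* genericity: dF0/\dF1/\dF2 <> 0 on f~^{-1}(0) \ {0} *)
  (hgen : forall w : 'I_4 -> R[i], nonzero_pt w ->
      (forall k, ftilde gamma F0 F1 F2 w k = 0) -> row_free (jacF F0 F1 F2 w))
  (* the foliation G of degree d given by ZA dX + ZB dY + C dZ, XA + YB + C = 0 *)
  (d : nat) (hd : (2 <= d)%N) (A B Cc : {mpoly R[i][3]})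
  (hA : A \is d.-homog) (hB : B \is d.-homog) (hC : Cc \is d.+1.-homog)
  (hEuler : 'X_(inord 0) * A + 'X_(inord 1) * B + Cc = 0)
  (hsat : forall H : {mpoly R[i][3]},
      (forall k, mdvd H (omG A B Cc k)) -> mconst H)
  (* the line Z = 0 is invariant and is the only invariant algebraic curve *)
  (hZinv : invariant_curve (omG A B Cc) 'X_(inord 2))
  (honly : forall F : {mpoly R[i][3]}, (exists e, F \is e.-homog) ->
      mirreducible F -> invariant_curve (omG A B Cc) F ->
      exists c : R[i], c != 0 /\ F = c *: 'X_(inord 2))
  (* all singularities nondegenerate with nonreal characteristic numbers *)
  (hsing : forall q : 'I_3 -> R[i], singG A B Cc q ->
      forall k : 'I_3, q k != 0 -> nondeg_nonreal (lin_part (omG A B Cc) k q))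
  (* Sing(G) does not meet Y_2(f) *)
  (hY2 : forall w : 'I_4 -> R[i], nonzero_pt (ftilde gamma F0 F1 F2 w) ->
      ~~ row_free (jacF F0 F1 F2 w) -> ~ singG A B Cc (ftilde gamma F0 F1 F2 w))
  (* p = [w] in I(f) *)
  (w : 'I_4 -> R[i]) (hw : nonzero_pt w)
  (hp : forall k, ftilde gamma F0 F1 F2 w k = 0) :
  (* in the local chart at p, p is the origin and F is given by eta *)
  qh_singularity (eta_form gamma A B Cc).
Proof.
rewrite -(prednK (ltnW hgamma)).
exact: eta_qh_singularity hA hB hC hEuler hd hsing.
Qed.
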